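(* Let $\underline d=(1,d_1,\dots,d_r)$ and let $I_{r+1}\subset\cdots\subset I_1\subset I_0=\mathbb{C}[x_1,\dots,x_n]$ be a flag of monomial ideals with $\dim I_k/I_{k+1}=d_k$, with corresponding flag of partitions $\lambda_1\subset\lambda_2\subset\cdots\subset\lambda_{r+1}\subset\mathbb{Z}^n_{\ge0}$. Then the corresponding fixed point of $\mathrm{NHilb}^{\underline d}(\mathbb{A}^n)$ lies in $\mathrm{NHilb}^{\underline d}_{\mathrm{nil\text{-}fil}}(\mathbb{A}^n)$ if and only if for all $k\ge1$, all $\mathbf u\in\lambda_{k+1}\setminus\lambda_k$ and all $i=1,\dots,n$ we have $\mathbf u+e_i\notin\lambda_{k+1}$.
   Context: $\lambda_k$ is the set of exponents $\mathbf u\in\mathbb{Z}^n_{\ge0}$ with $x^{\mathbf u}\notin I_k$. $\mathrm{NHilb}^{\underline d}_{\mathrm{nil\text{-}fil}}(\mathbb{A}^n)$, the nilpotently filtered locus, is the locus of flags of ideals $I_{r+1}\subset\cdots\subset I_1\subset I_0=\mathbb{C}[x_1,\dots,x_n]$ with $\dim I_k/I_{k+1}=d_k$ such that $I_1=\mathfrak m=(x_1,\dots,x_n)$ and $I_1\cdot I_k\subset I_{k+1}$ for all $k$. $e_i$ is the $i$-th unit vector. *)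

From mathcomp Require Import all_boot all_algebra.
From mathcomp Require Import Rstruct.
From mathcomp Require Import complex.
From mathcomp Require Import mpoly.

Set Implicit Arguments.
Unset Strict Implicit.
Unset Printing Implicit Defensive.
Import GRing.Theory.
Local Open Scope ring_scope.

Definition CC : fieldType := complex Rdefinitions.R.

Notation Poly n := {mpoly CC[n]}.

Definition pset (n : nat) := Poly n -> Prop.

Definition subpset n (I J : pset n) : Prop := forall p, I p -> J p.

Definition is_ideal n (I : pset n) : Prop :=
  [/\ I 0, (forall p q, I p -> I q -> I (p + q)) &
      (forall p q, I q -> I (p * q))].

Definition is_monomial_ideal n (I : pset n) : Prop :=
  is_ideal I /\ forall p, I p <-> (forall m, m \in msupp p -> I 'X_[m]).

Definition unit_ideal n : pset n := fun _ => True.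

Definition max_ideal n : pset n :=
  fun p => exists q : 'I_n -> Poly n, p = \sum_(i < n) q i * 'X_i.

Definition ideal_mul n (I J : pset n) : pset n :=
  fun p => exists s : seq (Poly n * Poly n),
    (forall x, x \in s -> I x.1 /\ J x.2) /\ p = \sum_(x <- s) x.1 * x.2.

(* dim_C (I / J) = d, for J subset of I. *)
Definition quot_dim n (I J : pset n) (d : nat) : Prop :=
  exists b : 'I_d -> Poly n,
    [/\ forall i, I (b i),
        (forall p, I p -> exists c : 'I_d -> CC,
             J (p - \sum_(i < d) c i *: b i)) &
        (forall c : 'I_d -> CC, J (\sum_(i < d) c i *: b i) -> forall i, c i = 0)].

Definition monomial_flag n (r : nat) (d : nat -> nat) (I : nat -> pset n) : Prop :=
  [/\ d 0%N = 1%N,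
      (forall k, (k <= r.+1)%N -> is_monomial_ideal (I k)),
      (forall p, I 0%N p <-> unit_ideal p),
      (forall k, (k <= r)%N -> subpset (I k.+1) (I k)) &
      (forall k, (k <= r)%N -> quot_dim (I k) (I k.+1) (d k))].

(* The nilpotently filtered locus: I_1 = m and I_1 * I_k c I_{k+1}. *)
Definition nil_filtered n (r : nat) (I : nat -> pset n) : Prop :=
  (forall p, I 1%N p <-> max_ideal p) /\
  (forall k, (k <= r)%N -> subpset (ideal_mul (I 1%N) (I k)) (I k.+1)).

Definition lam n (I : pset n) (u : 'X_{1..n}) : Prop := ~ I 'X_[u].

From mathcomp Require Import all_boot all_algebra.
From mathcomp Require Import Rstruct complex mpoly.
From Stdlib Require Import Classical.
Set Implicit Arguments.
Unset Strict Implicit.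
Unset Printing Implicit Defensive.
Local Open Scope ring_scope.
Import GRing.Theory.

(* Since dim I_0/I_1 = 1, the monomial ideal I_1 misses 1 but contains every
   x_i (x_i is congruent to a constant mod I_1, and a nonzero constant would
   put the monomial 1 into I_1), so I_1 = m. For monomial ideals, m I_k is
   contained in I_(k+1) iff x_i x^u lies in I_(k+1) for every monomial x^u of
   I_k; this is automatic when x^u is already in I_(k+1), and otherwise it is
   exactly the condition on u in lambda_(k+1) \ lambda_k. *)

Section Ideals.
Variable n : nat.
Implicit Types (A J K : pset n) (p q : {mpoly CC[n]}).

Lemma ideal_sum J (T : Type) (s : seq T) (P : pred T) (F : T -> {mpoly CC[n]}) :
  is_ideal J -> (forall x, P x -> J (F x)) -> J (\sum_(x <- s | P x) F x).
Proof. by move=> [J0 JD _] JF; apply: big_ind. Qed.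

Lemma ideal_scale J c p : is_ideal J -> J p -> J (c *: p).
Proof. by move=> [_ _ JM] Jp; rewrite -mul_mpolyC; apply: JM. Qed.

Lemma ideal_sub J p q : is_ideal J -> J p -> J q -> J (p - q).
Proof.
move=> idJ Jp Jq; case: (idJ) => _ JD _; apply: JD => //.
by rewrite -scaleN1r; apply: ideal_scale.
Qed.

Lemma ideal1_full J p : is_ideal J -> J 1 -> J p.
Proof. by move=> [_ _ JM] J1; rewrite -(mulr1 p); apply: JM. Qed.

Lemma max_ideal_ideal : is_ideal (@max_ideal n).
Proof.
split.
- by exists (fun _ => 0); rewrite big1 // => i _; rewrite mul0r.
- move=> _ _ [a ->] [b ->]; exists (fun i => a i + b i).
  by rewrite -big_split; apply: eq_bigr => i _; rewrite mulrDl.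
- move=> p _ [a ->]; exists (fun i => p * a i).
  by rewrite mulr_sumr; apply: eq_bigr => i _; rewrite mulrA.
Qed.

Lemma max_idealX1 (i : 'I_n) : max_ideal 'X_i.
Proof.
exists (fun j => (j == i)%:R).
rewrite (bigD1 i) //= eqxx mul1r big1 ?addr0 // => j /negbTE ->.
by rewrite mul0r.
Qed.

Lemma max_idealX (m : 'X_{1..n}) : m != 0%MM -> max_ideal 'X_[m].
Proof.
move=> m_neq0.
have [i mi_gt0] : exists i, (0 < m i)%N.
  apply: NNPP => no_i; case/eqP: m_neq0; apply/mnmP => j.
  rewrite mnm0E; apply/eqP; rewrite -leqn0 leqNgt.
  by apply/negP => mj_gt0; apply: no_i; exists j.
have le_Um : (U_(i) <= m)%MM.
  by apply/mnm_lepP => j; rewrite mnm1E; case: eqP => [<-|].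
rewrite -(submK le_Um) mpolyXD.
by case: max_ideal_ideal => _ _; apply; apply: max_idealX1.
Qed.

Lemma max_ideal_sub J :
  is_ideal J -> (forall i : 'I_n, J 'X_i) -> subpset (@max_ideal n) J.
Proof.
move=> idJ JX _ [q ->]; apply: ideal_sum => // i _.
by case: idJ => _ _; apply.
Qed.

Lemma monomial_ideal_sub_max J :
  is_monomial_ideal J -> ~ J 1 -> subpset J (@max_ideal n).
Proof.
move=> [_ Jmon] J1N p Jp; rewrite (mpolyE p) big_seq.
apply: ideal_sum; first exact: max_ideal_ideal.
move=> m m_supp; apply: ideal_scale; first exact: max_ideal_ideal.
apply: max_idealX; apply: contraPneq J1N => m0.
by apply; rewrite -mpolyX0 -m0; exact: (Jmon p).1 Jp m m_supp.
Qed.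

Lemma quot_dim_gt0_notin1 A J d :
  is_ideal J -> quot_dim A J d -> (0 < d)%N -> ~ J 1.
Proof.
move=> idJ [b [_ _ b_free]] d_gt0 J1.
have := b_free (fun _ => 1) (ideal1_full _ idJ J1) (Ordinal d_gt0).
by move/eqP; rewrite oner_eq0.
Qed.

Lemma quot_dim1_monomial_X1 A J (i : 'I_n) :
  (forall p, A p) -> is_monomial_ideal J -> quot_dim A J 1 -> J 'X_i.
Proof.
move=> Aall [idJ Jmon] dimJ.
have J1N := quot_dim_gt0_notin1 idJ dimJ isT.
case: dimJ => b [_ b_span _].
have [c1 J1] := b_span 1 (Aall 1); have [c2 JX] := b_span 'X_i (Aall _).
rewrite big_ord1 in J1; rewrite big_ord1 in JX.
have c1_neq0 : c1 ord0 != 0.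
  by apply: contraPneq J1N => c10; rewrite c10 scale0r subr0 in J1.
set a := c2 ord0 / c1 ord0.
have JXa : J ('X_i - a%:MP).
  have -> : 'X_i - a%:MP =
      ('X_i - c2 ord0 *: b ord0) - a *: (1 - c1 ord0 *: b ord0).
    rewrite scalerBr scalerA /a mulfVK // opprB addrA subrK.
    by rewrite -mul_mpolyC mulr1.
  by apply: ideal_sub => //; apply: ideal_scale.
have [a0 | a_neq0] := eqVneq a 0; first by rewrite a0 subr0 in JXa.
exfalso; apply: J1N; rewrite -mpolyX0; apply: ((Jmon _).1 JXa).
rewrite mcoeff_msupp mcoeffB mcoeffX mcoeffC eq_sym mnm1_eq0 eqxx mulr1 sub0r.
by rewrite eq_sym oppr_eq0.
Qed.

Lemma quot_dim1_monomial_eq_max A J :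
  (forall p, A p) -> is_monomial_ideal J -> quot_dim A J 1 ->
  forall p, J p <-> max_ideal p.
Proof.
move=> Aall monJ dimJ p; split; last first.
  apply: max_ideal_sub => [|i]; first by case: monJ.
  exact: quot_dim1_monomial_X1 dimJ.
apply: monomial_ideal_sub_max => //.
exact: quot_dim_gt0_notin1 (proj1 monJ) dimJ isT.
Qed.

Lemma monomial_ideal_mulX J K (i : 'I_n) q :
  is_monomial_ideal J -> is_ideal K ->
  (forall m, J 'X_[m] -> K 'X_[m + U_(i)]) -> J q -> K ('X_i * q).
Proof.
move=> [_ Jmon] idK JK Jq; rewrite (mpolyE q) mulr_sumr big_seq.
apply: ideal_sum => // m m_supp; rewrite -scalerAr; apply: ideal_scale => //.
by rewrite -mpolyXD addmC; apply/JK/(Jmon q).1.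
Qed.

Lemma ideal_mul_max_sub A J K :
  subpset A (@max_ideal n) -> is_monomial_ideal J -> is_ideal K ->
  (forall m (i : 'I_n), J 'X_[m] -> K 'X_[m + U_(i)]) ->
  subpset (ideal_mul A J) K.
Proof.
move=> A_max monJ idK JK _ [s [s_in ->]]; rewrite big_seq.
apply: ideal_sum => // x /s_in [/A_max [a ->] Jx2].
rewrite mulr_suml; apply: ideal_sum => // i _; rewrite -mulrA.
have [_ _ K_mul] := idK.
exact/K_mul/(monomial_ideal_mulX monJ idK (JK^~ i) Jx2).
Qed.

End Ideals.

Lemma nil_filtered_mulX n r (I : nat -> pset n) k (m : 'X_{1..n}) (i : 'I_n) :
  nil_filtered r I -> (k <= r)%N -> I k 'X_[m] -> I k.+1 'X_[m + U_(i)].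
Proof.
move=> [I1_max I_mul] le_kr Ikm; apply: (I_mul k le_kr).
exists [:: ('X_i, 'X_[m])]; split.
- by move=> x; rewrite inE => /eqP -> /=; split; first exact/I1_max/max_idealX1.
- by rewrite big_seq1 mpolyXD mulrC.
Qed.

Theorem mainTheorem19 (n r : nat) (d : nat -> nat) (I : nat -> pset n) :
  monomial_flag r d I ->
  (nil_filtered r I <->
   (forall k : nat, (1 <= k <= r)%N ->
    forall u : 'X_{1..n}, lam (I k.+1) u -> ~ lam (I k) u ->
    forall i : 'I_n, ~ lam (I k.+1) (u + U_(i))%MM)).
Proof.
move=> [d0 I_mon I0_all _ I_dim]; split.
  move=> nilI k /andP [_ le_kr] u _ Iku i; apply.
  by apply: nil_filtered_mulX nilI le_kr _; apply: NNPP.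
move=> lamI.
have I0_all' p : I 0%N p by apply/I0_all.
have I1_max := quot_dim1_monomial_eq_max I0_all' (I_mon 1%N isT).
have := I_dim 0%N isT; rewrite d0 => /I1_max {}I1_max.
split=> // k le_kr; apply: ideal_mul_max_sub; first by move=> p /I1_max.
- exact: I_mon (leqW le_kr).
- by case: (I_mon k.+1 le_kr).
move=> m i Ikm; case: k le_kr Ikm => [|k] le_kr Ikm.
  by apply/I1_max/max_idealX; rewrite mnmD_eq0 mnm1_eq0 andbF.
have [Ik2m | Ik2mN] := classic (I k.+2 'X_[m]).
  by rewrite mpolyXD mulrC; case: (proj1 (I_mon k.+2 le_kr)) => _ _; apply.
by apply: NNPP; apply: lamI k.+1 le_kr m Ik2mN (fun lam_m => lam_m Ikm) i.
Qed.
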